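(* Let $M$ be a prefix matching and let $a_1\to b_1\to\cdots\to a_p\to b_p\to a_{p+1}=a_1$ be a directed cycle in $\Gamma^M$ as described in the context, with $a_i=(a_{i,0},\dots,a_{i,k})$. Assume that for all $i$, $d_i=c_i+1$ and $d(a_{i+1,c_i},a_{i+1,c_i+1})=1$. Then $d(a_{i,d_i-1},a_{i,d_i})=1$ for all $i$.
   Context: $G$ is a finite simple connected graph with distance $d$; $\ell(x_0,\dots,x_k)=\sum_{i=0}^{k-1}d(x_i,x_{i+1})$; sequences are elements of $I_{k,l}(G)=\{(x_0,\dots,x_k)\in V(G)^{k+1}:x_i\ne x_{i+1}\ \forall i,\ \ell=l\}$. $\Gamma$ is the directed graph on sequences with an edge $a\to b$ whenever $b$ is obtained from $a=(x_0,\dots,x_k)$ by deleting some $x_i$, $1\le i\le k-1$, with $\ell(b)=\ell(a)$. A matching is a set of pairwise vertex-disjoint edges of $\Gamma$; $\Gamma^M$ is $\Gamma$ with edges of $M$ reversed. Matching states: ''unmatched'', ''insert$(i,v)$'' (matched to $(x_0,\dots,x_i,v,x_{i+1},\dots,x_k)$), ''delete$(i)$'' (matched to $(x_0,\dots,\hat x_i,\dots,x_k)$). A prefix matching: whenever $(x_0,\dots,x_k)$ has state insert$(i,v)$ (resp. delete$(i)$), every sequence $(x_0,\dots,x_{i+1},y_{i+2},\dots,y_{k'})$ has the same state. Cycle setting: $a_i\in I_{k,l}(G)$, $b_i\in I_{k-1,l}(G)$, each $a_i\to b_i$ is an edge of $\Gamma$ not in $M$, each $b_i\to a_{i+1}$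 is a reversed edge of $M$; $d_i$ is the position of the entry of $a_i$ deleted to obtain $b_i$; $a_{i+1}=(b_{i,0},\dots,b_{i,c_i},u_i,b_{i,c_i+1},\dots,b_{i,k-1})$ where $b_i=(b_{i,0},\dots,b_{i,k-1})$; indices $i$ are taken modulo $p$. *)

From mathcomp Require Import all_boot.
Set Implicit Arguments. Unset Strict Implicit. Unset Printing Implicit Defensive.

Section Graph.
Variables (T : finType) (adj : rel T).

Definition simple_connected_graph : Prop :=
  symmetric adj /\ irreflexive adj /\ (forall x y, connect adj x y).

Definition walk_of_length (x y : T) (n : nat) : bool :=
  [exists p : n.-tuple T, path adj x p && (last x p == y)].

(* Graph distance: the least n such that a walk of length n from x to y
   exists (in a connected graph this is < #|T|). *)
Definition dist (x y : T) : nat := find (walk_of_length x y) (iota 0 #|T|).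

Definition ell (s : seq T) : nat :=
  if s is x0 :: s' then sumn (pairmap dist x0 s') else 0.

(* Consecutive entries distinct, nonempty: s lies in some I_{k,l}(G). *)
Definition valid_seq (s : seq T) : bool :=
  if s is x0 :: s' then path (fun u v => u != v) x0 s' else false.

Definition in_I (k l : nat) (s : seq T) : bool :=
  [&& size s == k.+1, valid_seq s & ell s == l].

Definition delete_at (i : nat) (s : seq T) : seq T := take i s ++ drop i.+1 s.
Definition insert_at (i : nat) (v : T) (s : seq T) : seq T :=
  take i s ++ v :: drop i s.

Definition Gamma_edge (a b : seq T) : Prop :=
  valid_seq a /\ valid_seq b /\
  exists i, [/\ 1 <= i, i <= (size a).-2, b = delete_at i a & ell b = ell a].

Definition is_matching (M : seq T -> seq T -> Prop) : Prop :=
  (forall a b, M a b -> Gamma_edge a b) /\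
  (forall a b a' b', M a b -> M a' b' ->
     (a = a' \/ a = b' \/ b = a' \/ b = b') -> a = a' /\ b = b').

Definition state_insert (M : seq T -> seq T -> Prop) (x : seq T) (i : nat) (v : T) : Prop :=
  M (insert_at i.+1 v x) x.
Definition state_delete (M : seq T -> seq T -> Prop) (x : seq T) (i : nat) : Prop :=
  M x (delete_at i x).

Definition prefix_matching (M : seq T -> seq T -> Prop) : Prop :=
  is_matching M /\
  (forall x i v, valid_seq x -> state_insert M x i v ->
     forall y, valid_seq y -> take i.+2 y = take i.+2 x -> state_insert M y i v) /\
  (forall x i, valid_seq x -> state_delete M x i ->
     forall y, valid_seq y -> take i.+2 y = take i.+2 x -> state_delete M y i).

End Graph.

From mathcomp Require Import all_boot.
From mathcomp Require Import zify.

Set Implicit Arguments.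
Unset Strict Implicit.
Unset Printing Implicit Defensive.

(* The potential Phi(s) = sum_m ell(x_0..x_m) of all prefix lengths.  Replacing
   x_e (0 < e) by v while keeping ell fixed changes only the prefix ending at
   position e, so Phi(a_{i+1}) + d(a_{i,c_i}, a_{i,c_i+1}) = Phi(a_i) + 1.  The
   distance on the left is at least 1, hence Phi does not increase along the
   cycle; being periodic, it is constant, which forces that distance to be 1. *)

Section PrefixPotential.
Variables (T : finType) (adj : rel T).

Lemma dist_gt0 (x y : T) : x != y -> 0 < dist adj x y.
Proof.
move=> neq_xy; rewrite lt0n; apply: contra neq_xy => /eqP dist0.
have card_gt0 : 0 < #|T| by apply/card_gt0P; exists x.
have has_walk : has (walk_of_length adj x y) (iota 0 #|T|).
  by rewrite has_find -/(dist adj x y) dist0 size_iota.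
have := nth_find 0 has_walk; rewrite -/(dist adj x y) dist0 nth_iota // add0n.
by case/existsP=> w /andP[_]; rewrite tuple0 /= eq_sym.
Qed.

Lemma valid_seq_nth_neq (z : T) (s : seq T) j :
  valid_seq s -> j.+1 < size s -> nth z s j != nth z s j.+1.
Proof. by case: s => [|x s] //= /(pathP z); apply. Qed.

Lemma ell_rcons (w x : T) (P : seq T) :
  ell adj (rcons (w :: P) x) = ell adj (w :: P) + dist adj (last w P) x.
Proof. by rewrite -cats1 /ell /= pairmap_cat sumn_cat /= addn0. Qed.

Lemma ell_take_drop (s : seq T) m :
  ell adj (take m.+1 s) + ell adj (drop m s) = ell adj s.
Proof.
elim: s m => [|x [|y s] IH] [|m] //=.
by rewrite -addnA; congr (_ + _); exact: IH.
Qed.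

Lemma insert_delete_at_cat (P S : seq T) (x v : T) :
  insert_at (size P) v (delete_at (size P) (P ++ x :: S)) = P ++ v :: S.
Proof.
rewrite /delete_at take_size_cat // drop_cat ltnNge leqnSn subSnn /= drop0.
by rewrite /insert_at take_size_cat // drop_size_cat.
Qed.

Definition prefix_potential (s : seq T) : nat :=
  \sum_(m < size s) ell adj (take m.+1 s).

Lemma prefix_potential_replace (w x v : T) (P S : seq T) :
  ell adj (w :: P ++ v :: S) = ell adj (w :: P ++ x :: S) ->
  prefix_potential (w :: P ++ v :: S) + dist adj (last w P) x =
  prefix_potential (w :: P ++ x :: S) + dist adj (last w P) v.
Proof.
move=> ell_eq; rewrite /prefix_potential.
set n := size (w :: P ++ x :: S).
have -> : size (w :: P ++ v :: S) = n by rewrite /n /= !size_cat.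
have e_lt : (size P).+1 < n by rewrite /n /= size_cat ltnS addnS ltnS leq_addr.
have take_e y : take (size P).+2 (w :: P ++ y :: S) = rcons (w :: P) y.
  by rewrite /= -cat_rcons take_size_cat ?size_rcons.
rewrite (bigD1 (Ordinal e_lt)) // [in RHS](bigD1 (Ordinal e_lt)) // !take_e.
have other_prefixes : forall m : 'I_n, m != Ordinal e_lt ->
    ell adj (take m.+1 (w :: P ++ v :: S)) = ell adj (take m.+1 (w :: P ++ x :: S)).
  move=> m /eqP ne_m; have [le_m | lt_m] := leqP m (size P).
    by rewrite -!(cat_cons w) !takel_cat.
  have gt_m : (size P).+1 < m.
    rewrite ltn_neqAle lt_m andbT; apply/eqP=> eq_m.
    by apply: ne_m; apply: val_inj; rewrite /= -eq_m.
  have same_suffix : drop m (w :: P ++ v :: S) = drop m (w :: P ++ x :: S).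
    by rewrite -!(cat_cons w) !drop_cat ltnNge (ltnW gt_m) /= -(subnSK gt_m).
  apply: (@addIn (ell adj (drop m (w :: P ++ x :: S)))).
  by rewrite -{1}same_suffix !ell_take_drop.
rewrite (eq_bigr _ other_prefixes) !ell_rcons -!addnA; congr (_ + _).
by rewrite addnCA [in RHS]addnC addnA.
Qed.

Lemma nth_cons_cat_size (z w y : T) (P S : seq T) :
  nth z (w :: P ++ y :: S) (size P) = last w P.
Proof. by rewrite -cat_cons nth_cat ltnSn -[size P]/(size (w :: P)).-1 nth_last. Qed.

Lemma prefix_potential_insert_delete (z v : T) (s : seq T) e :
  0 < e < size s ->
  let t := insert_at e v (delete_at e s) in
  ell adj t = ell adj s ->
  prefix_potential t + dist adj (nth z s e.-1) (nth z s e) =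
  prefix_potential s + dist adj (nth z t e.-1) (nth z t e).
Proof.
case: s => [|w s] //; case: e => [|e] //= e_lt.
have [P [x [S [-> <-]]]] : exists P x S, s = P ++ x :: S /\ size P = e.
  exists (take e s), (nth z s e), (drop e.+1 s).
  by rewrite -drop_nth ?cat_take_drop ?size_takel // ltnW.
rewrite /insert_at /delete_at /= -/(delete_at _ _) -/(insert_at _ _ _).
rewrite insert_delete_at_cat !nth_cons_cat_size /= !nth_cat ltnn subnn /=.
exact: prefix_potential_replace.
Qed.

End PrefixPotential.

Lemma nonincreasing_cycle_eq (f : nat -> nat) (p : nat) :
  f p = f 0 -> (forall i, i < p -> f i.+1 <= f i) ->
  forall i, i < p -> f i.+1 = f i.
Proof.
move=> f_per f_step.
have f_mono : {in [pred i | i <= p] &, {homo f : i j / i <= j >-> j <= i}}.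
  apply: homo_leq_in => [//|y x z le_yx le_zy|i j _ le_jp k /andP[_ lt_kj]|i _].
  - exact: leq_trans le_zy le_yx.
  - by rewrite inE in le_jp *; apply: leq_trans (ltnW lt_kj) le_jp.
  - by rewrite inE => /f_step.
move=> i lt_ip; apply/eqP; rewrite eqn_leq f_step //=.
apply: (@leq_trans (f 0)); first by apply: f_mono; rewrite ?inE // ltnW.
by rewrite -f_per; apply: f_mono; rewrite ?inE.
Qed.

(* Indices are 0-based: the cycle is a_0 -> b_0 -> a_1 -> ... -> b_{p-1} -> a_p = a_0. *)
Theorem lemma3p8 (T : finType) (adj : rel T)
  (HG : simple_connected_graph adj)
  (M : seq T -> seq T -> Prop) (HM : prefix_matching adj M)
  (k l p : nat) (Hp : 0 < p)
  (a b : nat -> seq T) (d c : nat -> nat) (u : nat -> T)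
  (Hper : a p = a 0)
  (Ha : forall i, i < p -> in_I adj k l (a i))
  (Hb : forall i, i < p -> in_I adj k.-1 l (b i))
  (Hedge : forall i, i < p -> Gamma_edge adj (a i) (b i))
  (HnotM : forall i, i < p -> ~ M (a i) (b i))
  (Hd : forall i, i < p -> [/\ 1 <= d i, d i <= k.-1 & b i = delete_at (d i) (a i)])
  (HMrev : forall i, i < p -> M (a i.+1) (b i))
  (Hc : forall i, i < p -> a i.+1 = insert_at (c i).+1 (u i) (b i))
  (Hdc : forall i, i < p -> d i = (c i).+1)
  (Hdist1 : forall i, i < p ->
     dist adj (nth (u i) (a i.+1) (c i)) (nth (u i) (a i.+1) (c i).+1) = 1) :
  forall i, i < p -> dist adj (nth (u i) (a i) (d i).-1) (nth (u i) (a i) (d i)) = 1.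
Proof.
pose Phi j := prefix_potential adj (a j).
have in_I_a j : j <= p -> in_I adj k l (a j).
  by rewrite leq_eqVlt => /orP[/eqP-> | /Ha //]; rewrite Hper; apply: Ha.
have Phi_step j : j < p ->
    Phi j.+1 + dist adj (nth (u j) (a j) (c j)) (nth (u j) (a j) (c j).+1) = Phi j + 1.
  move=> lt_jp; have [d_gt0 d_le b_j] := Hd j lt_jp.
  have a_next : a j.+1 = insert_at (d j) (u j) (delete_at (d j) (a j)).
    by rewrite Hc // b_j Hdc.
  have /and3P[/eqP size_aj _ /eqP ell_aj] := Ha j lt_jp.
  have /and3P[_ _ /eqP ell_anext] := in_I_a j.+1 lt_jp.
  have := @prefix_potential_insert_delete _ adj (u j) (u j) (a j) (d j).
  rewrite -a_next /= ell_anext ell_aj size_aj d_gt0 Hdc //= Hdist1 // => -> //.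
  by rewrite Hdc // in d_le; lia.
have dist_gt0_cycle j : j < p ->
    0 < dist adj (nth (u j) (a j) (c j)) (nth (u j) (a j) (c j).+1).
  move=> lt_jp; have /and3P[/eqP size_aj valid_aj _] := Ha j lt_jp.
  have [_ d_le _] := Hd j lt_jp; rewrite Hdc // in d_le.
  by apply/dist_gt0/valid_seq_nth_neq; rewrite // size_aj; lia.
have Phi_per : Phi p = Phi 0 by rewrite /Phi Hper.
have Phi_noninc j : j < p -> Phi j.+1 <= Phi j.
  by move=> lt_jp; have := Phi_step j lt_jp; have := dist_gt0_cycle j lt_jp; lia.
move=> i lt_ip; have /eqP := Phi_step i lt_ip.
by rewrite (nonincreasing_cycle_eq Phi_per Phi_noninc) // eqn_add2l Hdc //= => /eqP.
Qed.
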